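(* Over undirected graphs, the node classifier $\varphi_{\mathit{GadLin}}(x)$ is not expressible in $\mathrm{C}^2$: there is no $\mathrm{C}^2$ formula $\varphi(x)$ over the signature $\{E,P_1,P_2,P_3\}$ such that for every undirected graph $G$ of dimension 3 and every node $v$ of $G$, $G\models\varphi(v)$ iff $G$ is isomorphic to $\mathsf{gad}(G')$ for some directed graph $G'$ whose edge relation is a strict linear order.
   Context: A directed graph of dimension $d$ is $G=(V,E,\lambda)$ with $V$ finite, $E\subseteq V\times V$ without loops, $\lambda:V\to\{0,1\}^d$; it is viewed as a first-order structure with relation $E$ and unary predicates $P_i=\{v:\lambda(v)_i=1\}$. Undirected graphs are directed graphs with symmetric $E$; $\{v,w\}$ denotes the pair $(v,w),(w,v)$. $\mathrm{C}^2$ is the fragment of first-order logic with equality using only two variables $x,y$ but allowing counting quantifiers $\exists_k$ for every $k\in\mathbb{N}$ (''at least $k$ distinct elements such that''). The gadgetisation $\mathsf{gad}(G)$ of a directed graph $G=(V,E,\lambda)$ is the undirected graph $(V',E',\lambda')$ of dimension 3 such that for each edge $(u,w)\in E$: $V'$ contains $v_u^1, v_{(u,w)}^2, v_{(u,w)}^3, v_w^1$; $E'$ contains $\{v_u^1,v_{(u,w)}^2\}$, $\{v_{(u,w)}^2,v_{(u,w)}^3\}$, $\{v_{(u,w)}^3,v_w^1\}$; $\lambda'(v_u^1)=\lambda'(v_w^1)=(1,0,0)$, $\lambda'(v^2_{(u,w)})=(0,1,0)$, $\lambda'(v^3_{(u,w)})=(0,0,1)$ (no other nodes or edges). A strict linear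 order is an irreflexive, transitive, total relation. $\varphi_{\mathit{GadLin}}(x)$ accepts a node of $G$ iff $G$ is isomorphic to $\mathsf{gad}(G')$ for some strict linear order $G'$. *)

From mathcomp Require Import all_boot.
Set Implicit Arguments. Unset Strict Implicit. Unset Printing Implicit Defensive.

(** A (directed) graph of dimension [d]: finite vertex set, edge relation,
    labelling [V -> {0,1}^d] given as [V -> 'I_d -> bool]. *)
Record graph (d : nat) := Graph {
  gV : finType;
  gE : rel gV;
  glab : gV -> 'I_d -> bool }.
Arguments gV {d} g.
Arguments gE {d} g _ _.
Arguments glab {d} g _ _.

Definition loopfree d (G : graph d) : Prop := irreflexive (gE G).
Definition undirected d (G : graph d) : Prop :=
  loopfree G /\ symmetric (gE G).

Definition strict_linear_order d (G : graph d) : Prop :=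
  irreflexive (gE G) /\ transitive (gE G) /\
  (forall u w : gV G, u != w -> gE G u w || gE G w u).

Definition isomorphic d (G H : graph d) : Prop :=
  exists f : gV G -> gV H, bijective f /\
    (forall u v, gE H (f u) (f v) = gE G u v) /\
    (forall v i, glab H (f v) i = glab G v i).

(** Gadgetisation. Nodes: v_u^1 for every endpoint u of some edge,
    and v^2_e (tag false), v^3_e (tag true) for every edge e. *)
Section Gad.
Variables (d : nat) (G : graph d).

Definition incident (u : gV G) : bool := [exists w, gE G u w || gE G w u].
Definition gad_edge (p : gV G * gV G) : bool := gE G p.1 p.2.

Definition gadV : finType :=
  ({u : gV G | incident u} + ({p : gV G * gV G | gad_edge p} * bool))%type.

(* directed "base" edges: v_u^1 - v^2_(u,w), v^2_(u,w) - v^3_(u,w), v^3_(u,w) - v_w^1 *)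
Definition gadE0 (a b : gadV) : bool :=
  match a, b with
  | inl u, inr (e, false) => val u == (val e).1
  | inr (e, false), inr (e', true) => e == e'
  | inr (e, true), inl w => val w == (val e).2
  | _, _ => false
  end.

Definition gadE : rel gadV := fun a b => gadE0 a b || gadE0 b a.

Definition gadlab (a : gadV) (i : 'I_3) : bool :=
  match a with
  | inl _ => nat_of_ord i == 0
  | inr (_, false) => nat_of_ord i == 1
  | inr (_, true) => nat_of_ord i == 2
  end.

Definition gad : graph 3 := @Graph 3 gadV gadE gadlab.
End Gad.

(** Two-variable counting logic C^2 over signature {E, P_1, P_2, P_3}
    (P_{i+1} is [FP i], i : 'I_3). *)
Inductive var := vx | vy.
Definition var_eqb (a b : var) : bool :=
  match a, b with vx, vx | vy, vy => true | _, _ => false end.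

Inductive form :=
  | FEq (a b : var)
  | FE (a b : var)
  | FP (i : 'I_3) (a : var)
  | FNot (f : form)
  | FAnd (f g : form)
  | FOr (f g : form)
  | FExists (k : nat) (a : var) (f : form).

Definition upd (T : Type) (s : var -> T) (a : var) (w : T) : var -> T :=
  fun b => if var_eqb a b then w else s b.

Fixpoint sat (G : graph 3) (s : var -> gV G) (f : form) {struct f} : bool :=
  match f with
  | FEq a b => s a == s b
  | FE a b => gE G (s a) (s b)
  | FP i a => glab G (s a) i
  | FNot f => ~~ sat s f
  | FAnd f g => sat s f && sat s g
  | FOr f g => sat s f || sat s g
  | FExists k a f => k <= #|[pred w | sat (upd s a w) f]|
  end.
Arguments sat G s f : clear implicits.

(** Does y occur free? A formula phi(x) is one where y does not occur free. *)
Fixpoint y_free (f : form) : bool :=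
  match f with
  | FEq a b | FE a b => var_eqb a vy || var_eqb b vy
  | FP _ a => if a is vy then true else false
  | FNot f => y_free f
  | FAnd f g | FOr f g => y_free f || y_free g
  | FExists _ a f => if a is vy then false else y_free f
  end.

From mathcomp Require Import all_boot fingroup perm.
From mathcomp Require Import zify.
Set Implicit Arguments. Unset Strict Implicit. Unset Printing Implicit Defensive.

(* Fix a formula of quantifier depth q whose counting thresholds are at most K.
   Let L be the strict order on 'I_n and D the tournament obtained from it by
   reversing the pair {m, m+2}, which creates the 3-cycle m -> m+1 -> m+2 -> m.
   For n and m large with respect to q and K, Duplicator wins the q-round
   counting game with thresholds K on gad(L) and gad(D). Her invariant: pebbled
   nodes carry the same labels and the same equalities between their
   endpoints, and corresponding endpoints either coincide or both lie in a
   central window of the order that loses K+3 positions on each side per round.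
   A permutation of the window matching the endpoints of the other pebble
   transports every class of candidate nodes of gad(L) onto the same class of
   gad(D) and agrees with the edge relations, except on pairs of central
   vertices that are not both endpoints of that pebble; a class containing such
   a pair has at least K edges on both sides. So phi cannot tell gad(L), which
   it must accept, from gad(D), which it must reject: an isomorphism
   gad(D) ~ gad(G') maps the 3-cycle of D onto a 3-cycle of G'. *)

Fixpoint quant_depth (f : form) : nat :=
  match f with
  | FNot f => quant_depth f
  | FAnd f g | FOr f g => maxn (quant_depth f) (quant_depth g)
  | FExists _ _ f => (quant_depth f).+1
  | _ => 0
  end.

Fixpoint count_bound (f : form) : nat :=
  match f with
  | FNot f => count_bound f
  | FAnd f g | FOr f g => maxn (count_bound f) (count_bound g)
  | FExists k _ f => maxn k (count_bound f)
  | _ => 0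
  end.

Definition other (a : var) : var := if a is vx then vy else vx.

Lemma updE (T : Type) (s : var -> T) a w x :
  upd s a w x = if var_eqb a x then w else s (other a).
Proof. by case: a; case: x. Qed.

Lemma minn_card_classes (V V' T : finType) (cl : V -> T) (cl' : V' -> T)
    (P : pred V) (P' : pred V') K :
  (forall t, minn #|[pred w | cl w == t]| K = minn #|[pred w | cl' w == t]| K) ->
  (forall w w', cl w = cl' w' -> P w = P' w') ->
  minn #|P| K = minn #|P'| K.
Proof.
move=> cl_cards cl_P.
have cardE (U : finType) (c : U -> T) (Q : pred U) :
    #|Q| = \sum_(t : T) #|[pred w | Q w && (c w == t)]|.
  rewrite -sum1_card (partition_big c predT) //=.
  by apply: eq_bigr => t _; rewrite sum1_card.
rewrite (cardE _ cl) (cardE _ cl').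
apply: (big_ind2 (fun a b => minn a K = minn b K)) => // [a b c d|t _]; first lia.
have leq_class (U : finType) (c : U -> T) (Q : pred U) :
    #|[pred w | Q w && (c w == t)]| <= #|[pred w | c w == t]|.
  by apply: subset_leq_card; apply/subsetP => w; rewrite !inE => /andP[].
have := cl_cards t; have := leq_class _ cl P; have := leq_class _ cl' P'.
case: (pickP [pred w | cl w == t]) => [w /eqP clw|cl0]; last first.
  by rewrite (eq_card0 cl0); lia.
case: (pickP [pred w | cl' w == t]) => [w' /eqP clw'|cl'0]; last first.
  by rewrite (eq_card0 cl'0); lia.
have PE u : cl u == t -> P u = P' w' by move=> /eqP clu; apply: cl_P; rewrite clu.
have P'E u : cl' u == t -> P' u = P' w'.
  by move=> /eqP clu; rewrite -(cl_P w u) ?clu // (cl_P w w') ?clw.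
have -> : #|[pred u | P u && (cl u == t)]| = #|[pred u | P' w' && (cl u == t)]|.
  by apply: eq_card => u; rewrite !inE; case: (boolP (cl u == t)) => [/PE ->|]; rewrite ?andbF.
have -> : #|[pred u | P' u && (cl' u == t)]| = #|[pred u | P' w' && (cl' u == t)]|.
  by apply: eq_card => u; rewrite !inE; case: (boolP (cl' u == t)) => [/P'E ->|]; rewrite ?andbF.
by case: (P' w') => _ _ E; [exact: E | rewrite !eq_card0].
Qed.

Definition same_atoms (G H : graph 3) (s : var -> gV G) (s' : var -> gV H) : Prop :=
  forall a b, [/\ (s a == s b) = (s' a == s' b),
    gE G (s a) (s b) = gE H (s' a) (s' b) &
    forall i, glab G (s a) i = glab H (s' a) i].

(* Duplicator's winning positions in the [r]-round counting game with
   thresholds up to [K]: whichever pebble Spoiler moves, she can split both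
   universes into matching classes whose sizes agree up to [K]. *)
Fixpoint count_bisim (G H : graph 3) (K r : nat) (s : var -> gV G) (s' : var -> gV H) : Prop :=
  same_atoms s s' /\
  if r is r'.+1 then
    forall a, exists (T : finType) (cl : gV G -> T) (cl' : gV H -> T),
      (forall t, minn #|[pred w | cl w == t]| K = minn #|[pred w | cl' w == t]| K) /\
      (forall w w', cl w = cl' w' -> count_bisim K r' (upd s a w) (upd s' a w'))
  else True.

Lemma count_bisim_atoms (G H : graph 3) K r s s' :
  @count_bisim G H K r s s' -> same_atoms s s'.
Proof. by case: r => [|r] []. Qed.

Lemma count_bisim_sat (G H : graph 3) K (f : form) : forall r s s',
  @count_bisim G H K r s s' -> quant_depth f <= r -> count_bound f <= K ->
  sat G s f = sat H s' f.
Proof.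
elim: f => [a b|a b|i a|f IH|f IHf g IHg|f IHf g IHg|k a f IH] r s s' game /=;
    rewrite ?geq_max.
- by case: (count_bisim_atoms game a b).
- by case: (count_bisim_atoms game a b).
- by case: (count_bisim_atoms game a a).
- by move=> df kf; rewrite (IH r s s').
- by move=> /andP[df dg] /andP[kf kg]; rewrite (IHf r s s') ?(IHg r s s').
- by move=> /andP[df dg] /andP[kf kg]; rewrite (IHf r s s') ?(IHg r s s').
case: r game => [|r] [_ game] // df /andP[kK kf].
have [T [cl [cl' [cl_cards cl_next]]]] := game a.
suff : minn #|[pred w | sat G (upd s a w) f]| K = minn #|[pred w | sat H (upd s' a w) f]| K.
  by move=> E; apply/idP/idP; lia.
apply: (minn_card_classes cl_cards) => w w' /cl_next next.
exact: (IH r).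
Qed.

Lemma card_in_bij (X Y : finType) (A : pred X) (B : pred Y) (h : X -> Y) :
  {in A &, injective h} -> (forall x, A x -> B (h x)) ->
  (forall y, B y -> exists2 x, A x & h x = y) -> #|A| = #|B|.
Proof.
move=> hinj hAB hBA; rewrite -[#|A|](card_in_imset hinj) -[#|B|]cardsE.
congr (#|pred_of_set _|); apply/setP => y; rewrite inE.
by apply/imsetP/idP => [[x /hAB + ->] | /hBA[x Ax <-]] //; exists x.
Qed.

Lemma card_preim_inj (T : finType) (f : T -> T) (P : pred T) :
  injective f -> #|[pred x | P (f x)]| = #|P|.
Proof.
move=> finj; rewrite -[#|P|]cardsE -(card_preimset _ finj).
by apply: eq_card => x; rewrite !inE.
Qed.

Definition edge_count (T : finType) (C : eqType) (E : rel T) (c : T -> C) (a b : C) : nat :=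
  #|[pred p : T * T | [&& E p.1 p.2, c p.1 == a & c p.2 == b]]|.

Lemma edge_count_ge_out (T : finType) (C : eqType) (E : rel T) (c : T -> C) a b (x : T) :
  c x = a -> #|[pred y | E x y && (c y == b)]| <= edge_count E c a b.
Proof.
move=> cx; have pair_inj : injective (@pair T T x) by move=> y y' /(congr1 snd).
rewrite -cardsE -(card_imset _ pair_inj) -[X in _ <= X]cardsE; apply: subset_leq_card.
apply/subsetP => p /imsetP[y]; rewrite !inE => /andP[Exy cy] ->.
by rewrite /= Exy cx cy eqxx.
Qed.

Lemma edge_count_ge_in (T : finType) (C : eqType) (E : rel T) (c : T -> C) a b (y : T) :
  c y = b -> #|[pred x | E x y && (c x == a)]| <= edge_count E c a b.
Proof.
move=> cy; have pair_inj : injective (fun x : T => (x, y)) by move=> x x' /(congr1 fst).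
rewrite -cardsE -(card_imset _ pair_inj) -[X in _ <= X]cardsE; apply: subset_leq_card.
apply/subsetP => p /imsetP[x]; rewrite !inE => /andP[Exy cx] ->.
by rewrite /= Exy cy cx eqxx.
Qed.

Section StablePerm.
Variables (T : finType) (M : pred T).

Lemma tperm_stable (x y : T) : x = y \/ M x && M y ->
  (forall z, M (tperm x y z) = M z) /\ (forall z, ~~ M z -> tperm x y z = z).
Proof.
case=> [<-|/andP[Mx My]]; first by split=> z; rewrite tperm1 perm1.
by split=> z; case: tpermP => // ->; rewrite ?Mx ?My.
Qed.

Lemma exists_stable_perm (U1 U2 V1 V2 : T) :
  U1 = V1 \/ M U1 && M V1 -> U2 = V2 \/ M U2 && M V2 -> (U1 == U2) = (V1 == V2) ->
  exists pi : {perm T}, [/\ pi U1 = V1, pi U2 = V2,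
    forall x, M (pi x) = M x & forall x, ~~ M x -> pi x = x].
Proof.
move=> UV1 UV2 eqU; have [M1 fix1] := tperm_stable UV1.
pose v := tperm U1 V1 U2.
have vV2 : v = V2 \/ M v && M V2.
  rewrite /v; case: UV2 => [<-|/andP[MU2 MV2]]; last by right; rewrite M1 MU2.
  by case: (boolP (M U2)) => [MU2|/fix1 ->]; [right; rewrite M1 MU2|left].
have [M2 fix2] := tperm_stable vV2.
exists (tperm U1 V1 * tperm v V2)%g; split=> [||x|x /[dup] /fix1 + /fix2]; rewrite ?permM.
- rewrite /v tpermL; case: (eqVneq U1 U2) eqU => [<-|U12]; rewrite ?eqxx => /esym.
    by move=> /eqP <-; rewrite tpermL tpermR.
  move=> /negbT V12; apply: tpermD; last by rewrite eq_sym.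
  by rewrite -{2}(tpermL U1 V1) (inj_eq perm_inj) eq_sym.
- by rewrite tpermL.
- by rewrite M2 M1.
- by move=> -> ->.
Qed.

End StablePerm.

Section GadgetCoordinates.
Variables (d : nat) (G : graph d).

(* A gadget node is determined by its label [gtag] (0 for v^1_u, 1 for
   v^2_(u,w), 2 for v^3_(u,w)) and the endpoints [gsrc], [gdst] of its edge
   (both equal to [u] for v^1_u). *)
Definition gtag (w : gadV G) : nat :=
  match w with inl _ => 0 | inr (_, b) => if b then 2 else 1 end.
Definition gsrc (w : gadV G) : gV G :=
  match w with inl u => val u | inr (e, _) => (val e).1 end.
Definition gdst (w : gadV G) : gV G :=
  match w with inl u => val u | inr (e, _) => (val e).2 end.
Definition coord (k : bool) (w : gadV G) : gV G := if k then gdst w else gsrc w.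

Lemma gad_edge_eqE (e e' : {p : gV G * gV G | gad_edge p}) :
  (e == e') = ((val e).1 == (val e').1) && ((val e).2 == (val e').2).
Proof. by case: e => [[a b] ?]; case: e' => [[a' b'] ?]; rewrite -val_eqE /= xpair_eqE. Qed.

Lemma gad_eqE (w w' : gadV G) :
  (w == w') = [&& gtag w == gtag w', gsrc w == gsrc w' & gdst w == gdst w'].
Proof.
case: w => [u|[e []]]; case: w' => [u'|[e' []]] //=;
  by rewrite ?andbb ?(inj_eq (@inr_inj _ _)) ?(inj_eq (@inl_inj _ _)) ?xpair_eqE
       ?andbT ?andbF ?gad_edge_eqE.
Qed.

Lemma gadE0E (w w' : gadV G) : gadE0 w w' =
  [|| [&& gtag w == 0, gtag w' == 1 & gsrc w == gsrc w'],
      [&& gtag w == 1, gtag w' == 2, gsrc w == gsrc w' & gdst w == gdst w'] |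
      [&& gtag w == 2, gtag w' == 0 & gdst w == gsrc w']].
Proof.
case: w => [u|[e []]]; case: w' => [u'|[e' []]] //=;
  by rewrite ?orbF ?andbT ?gad_edge_eqE // eq_sym.
Qed.

Lemma gadlabE (w : gadV G) i : gadlab w i = (nat_of_ord i == gtag w).
Proof. by case: w => [u|[e []]]. Qed.

Lemma gtag_lt3 (w : gadV G) : gtag w < 3.
Proof. by case: w => [u|[e []]]. Qed.

Lemma gtag0_gsrc (w : gadV G) : gtag w = 0 -> gsrc w = gdst w.
Proof. by case: w => [u|[e []]]. Qed.

Lemma gtag_edge (w : gadV G) : gtag w != 0 -> gE G (gsrc w) (gdst w).
Proof. by case: w => [u|[[p Ep] []]]. Qed.

Lemma eq_gsrc_gdst (w : gadV G) : loopfree G -> (gsrc w == gdst w) = (gtag w == 0).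
Proof.
move=> irrG; have [/gtag0_gsrc ->|/gtag_edge] := eqVneq (gtag w) 0; first by rewrite eqxx.
by case: eqP => // ->; rewrite irrG.
Qed.

Lemma gad_undirected : undirected (gad G).
Proof.
split=> [w|w w']; last by rewrite /= /gadE orbC.
by rewrite /= /gadE orbb gadE0E; case: (gtag w) => [|[|[|]]].
Qed.

Lemma gad_path (a b c e : gadV G) :
  gtag a = 0 -> gtag b = 1 -> gtag c = 2 -> gtag e = 0 ->
  gadE a b -> gadE b c -> gadE c e -> gE G (gsrc a) (gsrc e).
Proof.
rewrite /gadE !gadE0E => -> -> Tc -> /=; rewrite Tc /= !orbF.
move=> /eqP-> /andP[/eqP-> _] /eqP <-.
by apply: gtag_edge; rewrite Tc.
Qed.

Definition gad_class (C : eqType) (c : gV G -> C) (w : gadV G) : 'I_3 * C * C :=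
  (inord (gtag w), c (gsrc w), c (gdst w)).

Lemma card_gad_class (C : eqType) (c : gV G -> C) (t0 : 'I_3) (a b : C) :
  (forall u, incident (G := G) u) ->
  #|[pred w | gad_class c w == (t0, a, b)]| =
  if t0 == 0 :> nat then #|[pred u | (c u == a) && (c u == b)]|
  else edge_count (gE G) c a b.
Proof.
move=> inc; have gtagE w : (inord (gtag w) == t0 :> 'I_3) = (gtag w == t0).
  by rewrite -val_eqE /= inordK ?gtag_lt3.
have -> : #|[pred w | gad_class c w == (t0, a, b)]| =
    #|[pred w | [&& gtag w == t0, c (gsrc w) == a & c (gdst w) == b]]|.
  by apply: eq_card => w; rewrite !inE /gad_class !xpair_eqE gtagE andbA.
case: ifP => [/eqP t00|t0N0].
  apply: (@card_in_bij _ _ _ _ gsrc) => [w w'|w|u /andP[ca cb]].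
  - rewrite !inE t00 => /and3P[/eqP T _ _] /and3P[/eqP T' _ _] E.
    by apply/eqP; rewrite gad_eqE T T' -(gtag0_gsrc T) -(gtag0_gsrc T') E !eqxx.
  - by rewrite !inE t00 => /and3P[/eqP/gtag0_gsrc -> -> ->].
  - by exists (inl (exist _ u (inc u))); rewrite //= t00 ca cb.
apply: (@card_in_bij _ _ _ _ (fun w => (gsrc w, gdst w))) => [w w'|w|[u u'] /and3P[E ca cb]].
- rewrite !inE => /and3P[/eqP T _ _] /and3P[/eqP T' _ _] [E E'].
  by apply/eqP; rewrite gad_eqE T T' E E' !eqxx.
- rewrite !inE => /and3P[/eqP T -> ->]; rewrite !andbT; apply: gtag_edge.
  by rewrite T t0N0.
- exists (inr (exist (fun p => gad_edge p) (u, u') E, t0 == 2 :> nat)) => //=.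
  have : t0 < 3 := ltn_ord t0; rewrite ca cb !andbT; move: t0N0.
  by case: (nat_of_ord t0) => [|[|[|]]].
Qed.

End GadgetCoordinates.

Lemma coord_eq_gtag d d' (G : graph d) (G' : graph d') (w : gadV G) (w' : gadV G') k l :
  loopfree G -> loopfree G' -> gtag w = gtag w' ->
  (coord k w == coord l w) = (coord k w' == coord l w').
Proof.
move=> irrG irrG' Tw; case: k; case: l; rewrite /= ?eqxx //.
  by rewrite eq_sym [RHS]eq_sym !eq_gsrc_gdst // Tw.
by rewrite !eq_gsrc_gdst // Tw.
Qed.

Lemma gad_same_atoms d d' (G : graph d) (G' : graph d')
    (s : var -> gadV G) (s' : var -> gadV G') :
  (forall a, gtag (s a) = gtag (s' a)) ->
  (forall a b k l, (coord k (s a) == coord l (s b)) = (coord k (s' a) == coord l (s' b))) ->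
  same_atoms (G := gad G) (H := gad G') s s'.
Proof.
move=> Ts Cs a b; split=> [||i] /=.
- by rewrite !gad_eqE !Ts (Cs a b false false) (Cs a b true true).
- rewrite /gadE !gadE0E !Ts (Cs a b false false) (Cs a b true true).
  by rewrite (Cs b a false false) (Cs b a true true) (Cs a b true false) (Cs b a true false).
- by rewrite !gadlabE Ts.
Qed.

Section GadgetIsomorphism.
Variables (d d' : nat) (G : graph d) (G' : graph d') (f : gadV G -> gadV G').
Hypothesis f_edge : forall u v, gadE (f u) (f v) = gadE u v.
Hypothesis f_lab : forall v i, gadlab (f v) i = gadlab v i.

Lemma gtag_iso w : gtag (f w) = gtag w.
Proof.
have := f_lab w (inord (gtag w)).
by rewrite !gadlabE inordK ?gtag_lt3 // eqxx => /eqP.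
Qed.

Lemma gad_iso_edge (a b : gV G) (Eab : gE G a b) (Ia : incident a) (Ib : incident b) :
  gE G' (gsrc (f (inl (exist _ a Ia)))) (gsrc (f (inl (exist _ b Ib)))).
Proof.
pose e := exist (fun p => gad_edge p) (a, b) Eab.
apply: (@gad_path _ _ _ (f (inr (e, false))) (f (inr (e, true)))); rewrite ?gtag_iso //.
- by rewrite f_edge /gadE /= eqxx.
- by rewrite f_edge /gadE /= eqxx.
- by rewrite f_edge /gadE /= eqxx.
Qed.

End GadgetIsomorphism.

Lemma incident_src d (G : graph d) (a b : gV G) : gE G a b -> incident a.
Proof. by move=> Eab; apply/existsP; exists b; rewrite Eab. Qed.

Lemma gad_iso_cycle3 d d' (G : graph d) (G' : graph d') (a b c : gV G) :
  gE G a b -> gE G b c -> gE G c a ->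
  irreflexive (gE G') -> transitive (gE G') -> ~ isomorphic (gad G) (gad G').
Proof.
move=> Eab Ebc Eca irrG' trG' [f [_ [f_edge f_lab]]].
have [Ia Ib Ic] := And3 (incident_src Eab) (incident_src Ebc) (incident_src Eca).
have E'ab := gad_iso_edge f_edge f_lab Eab Ia Ib.
have E'bc := gad_iso_edge f_edge f_lab Ebc Ib Ic.
have E'ca := gad_iso_edge f_edge f_lab Eca Ic Ia.
by have := trG' _ _ _ (trG' _ _ _ E'ab E'bc) E'ca; rewrite irrG'.
Qed.

Definition ord_graph n (E : rel 'I_n) : graph 0 := @Graph 0 'I_n E (fun _ _ => false).

Section Tournaments.
Variables (n m : nat).

Definition lin : rel 'I_n := fun i j => i < j.

Definition twist : rel 'I_n := fun i j =>
  ((i < j) && ~~ ((i == m :> nat) && (j == m.+2 :> nat))) ||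
  ((i == m.+2 :> nat) && (j == m :> nat)).

Definition Lin := ord_graph lin.
Definition Twist := ord_graph twist.

Lemma lin_irr : irreflexive lin.
Proof. exact: ltnn. Qed.

Lemma lin_total (i j : 'I_n) : i != j -> lin i j || lin j i.
Proof. by rewrite /lin -val_eqE neq_ltn. Qed.

Lemma lin_strict_linear_order : strict_linear_order Lin.
Proof.
split=> [i|]; first exact: lin_irr.
by split=> [j i k|i j]; [apply: ltn_trans | apply: lin_total].
Qed.

Lemma twist_irr : irreflexive twist.
Proof. by move=> i; rewrite /twist; lia. Qed.

Lemma twist_asym i j : twist i j -> ~~ twist j i.
Proof. by rewrite /twist; lia. Qed.

Lemma twist_total (i j : 'I_n) : i != j -> twist i j || twist j i.
Proof. by rewrite /twist -val_eqE /=; lia. Qed.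

Lemma twist_lt (i j : 'I_n) : i < j -> (i != m :> nat) || (j != m.+2 :> nat) -> twist i j.
Proof. by rewrite /twist; lia. Qed.

Lemma twist_off (x y : 'I_n) : x != m :> nat -> x != m.+2 :> nat ->
  twist x y = (x < y) /\ twist y x = (y < x).
Proof. by rewrite /twist; lia. Qed.

Lemma twist_not_gad_order d (G : graph d) : m.+2 < n ->
  strict_linear_order G -> ~ isomorphic (gad Twist) (gad G).
Proof.
move=> m2_lt_n [irrG [trG _]].
have lt_m k : k <= 2 -> m + k < n by lia.
have := @gad_iso_cycle3 _ _ Twist G (Ordinal (lt_m 0 isT))
    (Ordinal (lt_m 1 isT)) (Ordinal (lt_m 2 isT)).
by apply; rewrite //= /twist /=; lia.
Qed.

Variables (K q : nat).

Definition band r := r * K.+3.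

(* With [r] rounds left, vertices at distance at least [band r] from both ends
   of the order cannot be told apart; the pair reversed by [twist] lies inside
   that window for every [r <= q]. *)
Definition central r (j : nat) := (band r <= j) && (j + band r < n).

Hypothesis m_central : band q <= m.
Hypothesis m2_central : m.+2 + band q < n.

Lemma m2_lt_n : m.+2 < n.
Proof. exact: leq_ltn_trans (leq_addr _ _) m2_central. Qed.

Definition ord_m2 : 'I_n := Ordinal m2_lt_n.
Definition ord_m : 'I_n := Ordinal (ltnW (ltnW m2_lt_n)).

Lemma ord_graph_incident (E : rel 'I_n) : (forall i j : 'I_n, i != j -> E i j || E j i) ->
  forall j, incident (G := ord_graph E) j.
Proof.
have [n_gt0 n_gt1] : 0 < n /\ 1 < n by have := m2_lt_n; lia.
move=> Etotal j; apply/existsP.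
exists (if nat_of_ord j == 0 then Ordinal n_gt1 else Ordinal n_gt0); apply: Etotal.
by rewrite -val_eqE; case: ifP => /=; lia.
Qed.

Definition profile r (j : 'I_n) : option 'I_n := if central r j then None else Some j.

(* What Duplicator preserves about a vertex [j] when the pebbled node she must
   keep matching has endpoints [U1] and [U2]. *)
Definition pos_class r (U1 U2 j : 'I_n) : bool * bool * option 'I_n :=
  (j == U1, j == U2, profile r j).

Lemma bandS r : band r.+1 = band r + K.+3.
Proof. by rewrite /band mulSn addnC. Qed.

Lemma centralS r j : central r.+1 j -> central r j.
Proof. by rewrite /central bandS; lia. Qed.

Lemma central_m r : r <= q -> central r m && central r m.+2.
Proof.
move=> le_rq; have : band r <= band q by rewrite /band leq_mul2r le_rq orbT.
by rewrite /central; lia.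
Qed.

Lemma profile_eq r (x y : 'I_n) :
  profile r x = profile r y -> x = y \/ central r x && central r y.
Proof.
by rewrite /profile; case: ifP => _; case: ifP => _ //; [right | case; left].
Qed.

Lemma profileS r (x y : 'I_n) : profile r.+1 x = profile r.+1 y -> profile r x = profile r y.
Proof.
by case/profile_eq => [->|/andP[/centralS cx /centralS cy]]; rewrite // /profile cx cy.
Qed.

Lemma lt_noncentral r (x y y' : nat) :
  ~~ central r x -> central r y -> central r y' -> (x < y) = (x < y') /\ (y < x) = (y' < x).
Proof. by rewrite /central; lia. Qed.

Lemma pos_class_central r (U1 U2 x : 'I_n) :
  central r x -> x != U1 -> x != U2 -> pos_class r U1 U2 x = (false, false, None).
Proof. by rewrite /pos_class /profile => -> /negbTE -> /negbTE ->. Qed.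

Lemma card_window (lo k : nat) (P : pred 'I_n) (z1 z2 z3 : 'I_n) : lo + k <= n ->
  (forall j : 'I_n, lo <= j < lo + k -> j \notin [set z1; z2; z3] -> P j) ->
  k <= #|P| + 3.
Proof.
move=> le_n inP; have lt_n (i : 'I_k) : lo + i < n by have := ltn_ord i; lia.
pose g (i : 'I_k) : 'I_n := Ordinal (lt_n i).
have g_inj : injective g by move=> i i' /(congr1 val) /= /addnI /val_inj.
have : [set g i | i in 'I_k] \subset [set j | P j] :|: [set z1; z2; z3].
  apply/subsetP => _ /imsetP[i _ ->]; rewrite in_setU.
  apply/orP; case: (boolP (g i \in [set z1; z2; z3])) => [|gi]; [by right | left].
  by rewrite inE inP //=; have := ltn_ord i; lia.
move/subset_leq_card; rewrite card_imset // card_ord => /leq_trans; apply.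
rewrite cardsU cardsE; apply: leq_trans (leq_subr _ _) _; rewrite leq_add2l.
by rewrite cardsU cardsU1 !cards1; lia.
Qed.

Lemma many_central_in (E : rel 'I_n) r (U1 U2 x : 'I_n) : central r.+1 x ->
  (forall j : 'I_n, j < x -> j != m :> nat -> E j x) ->
  K <= #|[pred j | E j x && (pos_class r U1 U2 j == (false, false, None))]|.
Proof.
move=> cx Ein; rewrite -(leq_add2r 3) addn3.
move: cx; rewrite /central bandS => cx.
apply: (@card_window (x - K.+3) K.+3 _ U1 U2 ord_m); first lia.
move=> j wj; rewrite !inE => /norP[/norP[jU1 jU2] jm].
by rewrite Ein ?pos_class_central // /central; lia.
Qed.

Lemma many_central_out (E : rel 'I_n) r (U1 U2 x : 'I_n) : central r.+1 x ->
  (forall j : 'I_n, x < j -> j != m.+2 :> nat -> E x j) ->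
  K <= #|[pred j | E x j && (pos_class r U1 U2 j == (false, false, None))]|.
Proof.
move=> cx Eout; rewrite -(leq_add2r 3) addn3.
move: cx; rewrite /central bandS => cx.
apply: (@card_window x.+1 K.+3 _ U1 U2 ord_m2); first lia.
move=> j wj; rewrite !inE => /norP[/norP[jU1 jU2] jm2].
by rewrite Eout ?pos_class_central // /central; lia.
Qed.

Section PermutedCounts.
Variables (r : nat) (U1 U2 V1 V2 : 'I_n) (pi : {perm 'I_n}).
Hypothesis r_lt_q : r < q.
Hypotheses (piU1 : pi U1 = V1) (piU2 : pi U2 = V2).
Hypothesis central_pi : forall x, central r.+1 (pi x) = central r.+1 x.
Hypothesis pi_id : forall x : 'I_n, ~~ central r.+1 x -> pi x = x.
Hypothesis pebble_edge : U1 != U2 -> lin U1 U2 && twist V1 V2.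

Local Notation cU := (pos_class r U1 U2).
Local Notation cV := (pos_class r V1 V2).

Lemma pos_class_pi (j : 'I_n) : cV (pi j) = cU j.
Proof.
rewrite /pos_class -piU1 -piU2 2!(inj_eq perm_inj) /profile.
case: (boolP (central r.+1 j)) => [cj|/pi_id -> //].
by rewrite (centralS cj) centralS // central_pi.
Qed.

Lemma twist_pi_pebbles (x y : 'I_n) : x \in [:: U1; U2] -> y \in [:: U1; U2] ->
  twist (pi x) (pi y) = lin x y.
Proof.
have [U12|U12] := eqVneq U1 U2.
  by rewrite -U12 !inE !orbb => /eqP-> /eqP->; rewrite piU1 twist_irr lin_irr.
have /andP[lU tV] := pebble_edge U12.
rewrite !inE => /orP[] /eqP-> /orP[] /eqP->; rewrite ?piU1 ?piU2 ?twist_irr ?lin_irr //.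
  by rewrite lU tV.
by rewrite (negbTE (twist_asym tV)); move: lU; rewrite /lin; lia.
Qed.

Lemma lt_pi (x y : 'I_n) : ~~ central r.+1 x -> (x < pi y) = (x < y) /\ (pi y < x) = (y < x).
Proof.
move=> cx; have [cy|/pi_id -> //] := boolP (central r.+1 y).
by apply: (@lt_noncentral r.+1); rewrite ?central_pi.
Qed.

Lemma twist_pi_noncentral (x y : 'I_n) : ~~ (central r.+1 x && central r.+1 y) ->
  twist (pi x) (pi y) = lin x y.
Proof.
have /andP[cm cm2] := central_m r_lt_q.
have off z : ~~ central r.+1 z -> z != m :> nat /\ z != m.+2 :> nat.
  by move=> cz; split; apply: contraNneq cz => ->.
rewrite negb_and /lin => /orP[] cz; have [zm zm2] := off _ cz; rewrite (pi_id cz).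
- by have [-> _] := twist_off (pi y) zm zm2; have [-> _] := lt_pi y cz.
- by have [_ ->] := twist_off (pi x) zm zm2; have [_ ->] := lt_pi x cz.
Qed.

Lemma edge_count_twist_pi a b : edge_count twist cV a b =
  #|[pred p : 'I_n * 'I_n | [&& twist (pi p.1) (pi p.2), cU p.1 == a & cU p.2 == b]]|.
Proof.
have pi2_inj : injective (fun p : 'I_n * 'I_n => (pi p.1, pi p.2)).
  by move=> [x y] [x' y'] [/perm_inj -> /perm_inj ->].
rewrite /edge_count -(card_preim_inj _ pi2_inj).
by apply: eq_card => p; rewrite !inE !pos_class_pi.
Qed.

Lemma edge_counts_large (x y : 'I_n) :
  central r.+1 x -> central r.+1 y -> ~~ ((x \in [:: U1; U2]) && (y \in [:: U1; U2])) ->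
  K <= edge_count lin cU (cU x) (cU y) /\ K <= edge_count twist cV (cU x) (cU y).
Proof.
move=> cx cy; rewrite negb_and !inE !negb_or => /orP[/andP[xU1 xU2]|/andP[yU1 yU2]].
- rewrite (pos_class_central (centralS cx)) //; split.
    apply: leq_trans (edge_count_ge_in _ _ (erefl (cU y))).
    by apply: many_central_in.
  rewrite -pos_class_pi; apply: leq_trans (edge_count_ge_in _ _ (erefl (cV (pi y)))).
  apply: many_central_in; first by rewrite central_pi.
  by move=> j jy jm; apply: twist_lt; rewrite ?jm.
- rewrite (pos_class_central (centralS cy)) //; split.
    apply: leq_trans (edge_count_ge_out _ _ (erefl (cU x))).
    by apply: many_central_out.
  rewrite -pos_class_pi; apply: leq_trans (edge_count_ge_out _ _ (erefl (cV (pi x)))).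
  apply: many_central_out; first by rewrite central_pi.
  by move=> j xj jm2; apply: twist_lt; rewrite ?jm2 ?orbT.
Qed.

Lemma edge_count_lin_twist a b :
  minn (edge_count lin cU a b) K = minn (edge_count twist cV a b) K.
Proof.
pose pi_agrees (p : 'I_n * 'I_n) := ~~ (central r.+1 p.1 && central r.+1 p.2) ||
  (p.1 \in [:: U1; U2]) && (p.2 \in [:: U1; U2]).
case: (pickP [pred p | [&& cU p.1 == a, cU p.2 == b & ~~ pi_agrees p]]) => [[x y]|agree].
  rewrite /= /pi_agrees negb_or negbK => /and3P[/eqP <- /eqP <- /andP[/andP[cx cy] pxy]].
  by have [lK tK] := edge_counts_large cx cy pxy; rewrite (minn_idPr lK) (minn_idPr tK).
rewrite edge_count_twist_pi; congr minn; apply: eq_card => -[x y]; rewrite !inE /=.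
have := agree (x, y); rewrite /=.
case: (cU x == a) (cU y == b) => [] [] //=; rewrite ?andbF ?andbT // => /negbFE /=.
by case/orP=> [/twist_pi_noncentral|/andP[px /(twist_pi_pebbles px)]] ->.
Qed.

End PermutedCounts.

Lemma gad_class_counts r (u : gadV Lin) (u' : gadV Twist) : r < q ->
  gtag u = gtag u' -> profile r.+1 (gsrc u) = profile r.+1 (gsrc u') ->
  profile r.+1 (gdst u) = profile r.+1 (gdst u') -> (gsrc u == gdst u) = (gsrc u' == gdst u') ->
  forall t,
    minn #|[pred w | gad_class (G := Lin) (pos_class r (gsrc u) (gdst u)) w == t]| K =
    minn #|[pred w | gad_class (G := Twist) (pos_class r (gsrc u') (gdst u')) w == t]| K.
Proof.
move=> r_lt_q Tu Psrc Pdst eq_uu' [[t0 a] b].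
have [pi [piU1 piU2 central_pi pi_id]] :=
  exists_stable_perm (M := fun j : 'I_n => central r.+1 j)
    (profile_eq Psrc) (profile_eq Pdst) eq_uu'.
have incL := ord_graph_incident lin_total.
have incT := ord_graph_incident twist_total.
rewrite !card_gad_class //; case: ifP => _.
  congr minn; rewrite -[RHS](card_preim_inj _ (@perm_inj _ pi)).
  by apply: eq_card => j; rewrite !inE (pos_class_pi piU1 piU2 central_pi pi_id).
apply: (edge_count_lin_twist r_lt_q piU1 piU2 central_pi pi_id).
rewrite (eq_gsrc_gdst (G := Lin) _ lin_irr) => Tu0.
by apply/andP; split; [apply: (gtag_edge (G := Lin)) | apply: (gtag_edge (G := Twist))];
  rewrite // -Tu.
Qed.

Definition pebble_rel r (s : var -> gadV Lin) (s' : var -> gadV Twist) : Prop :=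
  [/\ forall a, gtag (s a) = gtag (s' a),
      forall a k, profile r (coord k (s a)) = profile r (coord k (s' a)) &
      forall a b k l, (coord k (s a) == coord l (s b)) = (coord k (s' a) == coord l (s' b))].

Lemma pebble_rel_upd r s s' a (w : gadV Lin) (w' : gadV Twist) :
  pebble_rel r.+1 s s' -> gtag w = gtag w' ->
  (forall k, pos_class r (gsrc (s (other a))) (gdst (s (other a))) (coord k w) =
             pos_class r (gsrc (s' (other a))) (gdst (s' (other a))) (coord k w')) ->
  pebble_rel r (upd s a w) (upd s' a w').
Proof.
move=> [Ts Ps Cs] Tw Pw.
have Cw k l : (coord k w == coord l (s (other a))) = (coord k w' == coord l (s' (other a))).
  by have [E1 E2 _] := Pw k; case: l.
split=> [x|x k|x y k l]; rewrite !updE.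
- by case: ifP.
- by case: ifP => _; [case: (Pw k) | apply: profileS].
case: ifP => _; case: ifP => _.
- by apply: coord_eq_gtag; [exact: lin_irr | exact: twist_irr |].
- exact: Cw.
- by rewrite eq_sym Cw eq_sym.
- exact: Cs.
Qed.

Lemma pebble_rel_atoms r s s' :
  pebble_rel r s s' -> same_atoms (G := gad Lin) (H := gad Twist) s s'.
Proof. by case=> Ts _ Cs; apply: gad_same_atoms. Qed.

Lemma pebble_rel_bisim r : r <= q -> forall s s',
  pebble_rel r s s' -> count_bisim (G := gad Lin) (H := gad Twist) K r s s'.
Proof.
elim: r => [|r IH] r_le_q s s' rel; (split; first exact: pebble_rel_atoms rel) => // a.
have [Ts Ps Cs] := rel; pose b := other a.
exists ('I_3 * (bool * bool * option 'I_n) * (bool * bool * option 'I_n))%type.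
exists (gad_class (G := Lin) (pos_class r (gsrc (s b)) (gdst (s b)))).
exists (gad_class (G := Twist) (pos_class r (gsrc (s' b)) (gdst (s' b)))); split.
  by apply: gad_class_counts; rewrite // ?(Ps b false) ?(Ps b true) ?(Cs b b false true).
move=> w w' cl_ww'; apply: IH; first exact: ltnW.
apply: pebble_rel_upd rel _ _ => [|[]]; last 2 first.
- exact: (congr1 snd cl_ww').
- exact: (congr1 (snd \o fst) cl_ww').
by have := congr1 (fun t => val t.1.1) cl_ww'; rewrite /= !inordK ?gtag_lt3.
Qed.

Lemma gad_lin_twist_indistinguishable f : quant_depth f <= q -> count_bound f <= K ->
  exists (v : gadV Lin) (v' : gadV Twist),
    sat (gad Lin) (fun _ => v) f = sat (gad Twist) (fun _ => v') f.
Proof.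
move=> df kf; exists (inl (exist _ ord_m (ord_graph_incident lin_total ord_m))).
exists (inl (exist _ ord_m (ord_graph_incident twist_total ord_m))).
by apply: (count_bisim_sat (pebble_rel_bisim (leqnn q) _)) => //; split.
Qed.

End Tournaments.

Theorem theorem6 :
  ~ exists phi : form,
      ~~ y_free phi /\
      forall (G : graph 3), undirected G ->
      forall v : gV G,
        sat G (fun _ => v) phi <->
        exists (d : nat) (G' : graph d),
          strict_linear_order G' /\ isomorphic G (gad G').
Proof.
case=> f [_ gad_order_iff].
pose K := count_bound f; pose q := quant_depth f; pose m := band K q; pose n := m.+3 + m.
have m_central : band K q <= m by [].
have m2_central : m.+2 + band K q < n by rewrite /n addSn.
have [v [v' sat_vv']] :=
  gad_lin_twist_indistinguishable m_central m2_central (leqnn q) (leqnn K).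
have [d [G [ordG]]] : exists d (G : graph d),
    strict_linear_order G /\ isomorphic (gad (Twist n m)) (gad G).
  apply/(gad_order_iff _ (gad_undirected _) v'); rewrite -sat_vv'.
  apply/(gad_order_iff _ (gad_undirected _) v); exists 0, (Lin n).
  by split; [exact: lin_strict_linear_order | exists id; split; first exists id].
exact: (twist_not_gad_order (m2_lt_n m2_central) ordG).
Qed.
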